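(* Let $d \geq 3$ and $n \geq 2$ be primes with $\gcd(d,n) = 1$. Let $u \in S_{d,n}$ and let $[a_1,\dots,a_r]$ be a partition of $u$. Then there is some $i \in \{1,\dots,r\}$ with $\gcd(a_i, nd) = 1$.
   Context: Let $n^\ast \in \{1,\dots,d-1\}$ be the unique integer with $n^\ast \equiv -n \pmod d$, and $S_{d,n} = \{ n^\ast + jd : j \in \mathbb{Z}_{\geq 0},\ n^\ast + jd < n(d-1)\}$. A partition of a positive integer $u$ is a non-empty multiset $[a_1,\dots,a_r]$ of positive integers with $\sum a_i = u$. *)

From mathcomp Require Import all_boot.
Set Implicit Arguments. Unset Strict Implicit. Unset Printing Implicit Defensive.

Definition is_nstar (d n ns : nat) : Prop :=
  0 < ns < d /\ (ns + n) %% d = 0.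

Definition in_S (d n u : nat) : Prop :=
  exists ns j, is_nstar d n ns /\ u = ns + j * d /\ u < n * (d - 1).

(* A partition of u: a non-empty multiset (represented by a list) of
   positive integers summing to u. *)
Definition is_partition (u : nat) (s : seq nat) : Prop :=
  s != [::] /\ all (fun a => 0 < a) s /\ sumn s = u.

(* If every part were divisible by n or by d, then u = x n + y d.  Since
   u = -n (mod d) and d does not divide n, d divides x + 1, so
   u >= x n >= (d - 1) n, contradicting u < n (d - 1). *)
From mathcomp Require Import all_boot.

Set Implicit Arguments.
Unset Strict Implicit.
Unset Printing Implicit Defensive.

Lemma sumn_dvd_orE (n d : nat) (s : seq nat) :
  all (fun a => (n %| a) || (d %| a)) s ->
  exists x y, sumn s = x * n + y * d.
Proof.
elim: s => [|a s IH] /=; first by exists 0, 0.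
case/andP => /orP [] /dvdnP [k ->] /IH [x [y ->]].
- by exists (k + x), y; rewrite mulnDl addnA.
- by exists x, (k + y); rewrite mulnDl addnCA addnA.
Qed.

Lemma lincomb_opp_mod_ge (d n x y : nat) :
  coprime d n -> (x * n + y * d + n) %% d = 0 ->
  n * (d - 1) <= x * n + y * d.
Proof.
move=> co_dn u_mod.
have dvd_d_x1 : d %| x.+1.
  rewrite -(Gauss_dvdl _ co_dn) /dvdn mulSn.
  by move: u_mod; rewrite addnAC addnC modnMDl addnC => ->.
have le_d1_x : d - 1 <= x by rewrite leq_subLR add1n dvdn_leq.
by rewrite mulnC (leq_trans _ (leq_addr _ _)) // leq_mul2r le_d1_x orbT.
Qed.

Lemma not_coprime_mul_primes (n d a : nat) :
  prime n -> prime d -> ~~ coprime a (n * d) -> (n %| a) || (d %| a).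
Proof.
move=> pn pd.
rewrite coprimeMr (coprime_sym a n) (coprime_sym a d) !prime_coprime //.
by rewrite negb_and !negbK.
Qed.

Theorem lemma3p9 (d n u : nat) (s : seq nat) :
  prime d -> 3 <= d -> prime n -> 2 <= n -> coprime d n ->
  in_S d n u -> is_partition u s ->
  exists2 a, a \in s & coprime a (n * d).
Proof.
move=> pd _ pn _ co_dn [ns [j [[_ ns_mod] [u_def u_lt]]]] [_ [_ sum_s]].
have [/hasP [a a_s co_a] | /hasPn no_coprime] :=
  boolP (has (fun a => coprime a (n * d)) s); first by exists a.
have [|x [y sum_xy]] := @sumn_dvd_orE n d s.
  by apply/allP => a /no_coprime; apply: not_coprime_mul_primes.
have u_mod : (x * n + y * d + n) %% d = 0.
  by rewrite -sum_xy sum_s u_def addnAC addnC modnMDl.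
have := lincomb_opp_mod_ge co_dn u_mod.
by rewrite -sum_xy sum_s leqNgt u_lt.
Qed.
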